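(* Let $k\ge 2$, let $B=M\cup\{\omega_1,\ldots,\omega_p\}$ with $p\ge 1$ and $\omega_1,\ldots,\omega_p\in P_k\setminus M$, and let $F$ be a finite system of functions from $P_k(n)$ (for some $n\ge 1$). Then $$d(F)\le (d(B)+1)^{I_B(F)}-1 .$$
   Context: Let $k\ge 2$ be an integer and $E_k=\{0,1,\ldots,k-1\}$. $P_k(n)$ denotes the set of all functions $E_k^n\to E_k$ ($k$-valued logic functions of $n$ arguments), and $P_k=\bigcup_n P_k(n)$. Tuples in $E_k^n$ are ordered componentwise: $\tilde\alpha\le\tilde\beta$ iff $\alpha_j\le\beta_j$ for all $j$. A function $f$ is monotone if $\tilde\alpha\le\tilde\beta$ implies $f(\tilde\alpha)\le f(\tilde\beta)$; $M$ is the set of all monotone functions in $P_k$ (of all arities, including constants). A basis is a set $B=M\cup\{\omega_1,\ldots,\omega_p\}$ with $p\ge1$ and $\omega_i\in P_k\setminus M$. A circuit over $B$ with inputs $x_1,\ldots,x_n$ is a finite directed acyclic graph whose source nodes are labelled by the variables $x_1,\ldots,x_n$ and each of whose other nodes (gates) is labelled by a $q$-ary function from $B$ and has $q$ ordered incoming edges; each node computes a function of $P_k(n)$ in the obvious way. A circuit realizes a system $F$ of functions of $x_1,\ldots,x_n$ if every function of $F$ is computed at some node. Gates labelled by functions of $M$ have weight $0$, gates labelled by some $\omega_i$ have weight $1$. The non-monotone complexity $I_B(S)$ of a circuit $S$ is the sum of the weights of its gates; $I_B(F)$ is the minimum of $I_B(S)$ over all circuits $S$ over $B$ realizing $F$,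 and $I_B(f)=I_B(\{f\})$. A chain is a sequence $\tilde\alpha_1,\ldots,\tilde\alpha_r$ of pairwise distinct tuples of $E_k^n$ with $\tilde\alpha_i\le\tilde\alpha_{i+1}$ for $i=1,\ldots,r-1$. A pair $(\tilde\alpha,\tilde\beta)$ with $\tilde\alpha\le\tilde\beta$ is a jump for a system $F$ if $f(\tilde\alpha)>f(\tilde\beta)$ for at least one $f\in F$. For a chain $C=(\tilde\alpha_1,\ldots,\tilde\alpha_r)$, the decrease $d_C(F)$ is the number of $i\in\{1,\ldots,r-1\}$ such that $(\tilde\alpha_i,\tilde\alpha_{i+1})$ is a jump for $F$. The decrease $d(F)$ is the maximum of $d_C(F)$ over all chains $C$ in $E_k^n$; $d(f)=d(\{f\})$. Finally $d(B)=\max\{d(\omega_1),\ldots,d(\omega_p)\}$. *)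

From Stdlib Require List.
From mathcomp Require Import all_boot.
Set Implicit Arguments.
Unset Strict Implicit.
Unset Printing Implicit Defensive.

(* E_k = 'I_k ; tuples of E_k^n are finite functions 'I_n -> 'I_k. *)
Definition tup (k n : nat) := {ffun 'I_n -> 'I_k}.

Definition le_tup (k n : nat) (a b : tup k n) : bool := [forall j, a j <= b j].

Definition mono (k q : nat) (g : tup k q -> 'I_k) : Prop :=
  forall a b : tup k q, le_tup a b -> g a <= g b.

Definition is_chain (k n : nat) (s : seq (tup k n)) : bool :=
  uniq s && sorted (@le_tup k n) s.

Definition is_jump (k n : nat) (F : seq (tup k n -> 'I_k)) (a b : tup k n) : bool :=
  has (fun f : tup k n -> 'I_k => f b < f a) F.

Definition decr (k n : nat) (F : seq (tup k n -> 'I_k)) (s : seq (tup k n)) : nat :=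
  count (fun p => is_jump F p.1 p.2) (zip s (behead s)).

(* d(F): maximum over all chains (a chain has at most #|E_k^n| elements) *)
Definition dsys (k n : nat) (F : seq (tup k n -> 'I_k)) : nat :=
  \max_(l < #|{: tup k n}|.+1) \max_(t : l.-tuple (tup k n) | is_chain t) decr F t.

(* a function of P_k of some arity (used for the omega_i) *)
Record kfun (k : nat) := KFun { kf_ar : nat; kf_fn : tup k kf_ar -> 'I_k }.
Arguments kf_fn {k} !k _ : rename.

Definition dB (k : nat) (B : seq (kfun k)) : nat :=
  \max_(w <- B) dsys [:: kf_fn w].

(* Circuits as topologically ordered straight-line programs.
   A gate at position m may use any of the m previous nodes
   (nodes 0..n-1 are the inputs x_1..x_n). *)
Inductive gate (k m : nat) : Type :=
| GMon (q : nat) (g : tup k q -> 'I_k) (args : 'I_q -> 'I_m)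
| GOm (w : kfun k) (args : 'I_(kf_ar w) -> 'I_m).

Inductive circuit (k n : nat) : nat -> Type :=
| CInit : circuit k n n
| CSnoc (m : nat) : circuit k n m -> gate k m -> circuit k n m.+1.

Definition gate_eval (k m : nat) (v : 'I_m -> 'I_k) (g : gate k m) : 'I_k :=
  match g with
  | GMon q f a => f [ffun j => v (a j)]
  | GOm w a => kf_fn w [ffun j => v (a j)]
  end.

Fixpoint circ_vals (k n m : nat) (C : circuit k n m) (x : tup k n) : 'I_m -> 'I_k :=
  match C in circuit _ _ m return 'I_m -> 'I_k with
  | CInit => fun i => x i
  | CSnoc m' C' g =>
      let v := circ_vals C' x in
      fun i : 'I_m'.+1 =>
        match unlift ord_max i with Some j => v j | None => gate_eval v g end
  end.

(* gates are labelled by functions of B = M ∪ {omega_1..omega_p} *)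
Definition gate_ok (k m : nat) (B : seq (kfun k)) (g : gate k m) : Prop :=
  match g with
  | GMon q f _ => mono f
  | GOm w _ => List.In w B
  end.

Fixpoint circ_ok (k n m : nat) (B : seq (kfun k)) (C : circuit k n m) : Prop :=
  match C with
  | CInit => True
  | CSnoc _ C' g => circ_ok B C' /\ gate_ok B g
  end.

(* non-monotone complexity: number of omega-gates *)
Fixpoint weight (k n m : nat) (C : circuit k n m) : nat :=
  match C with
  | CInit => 0
  | CSnoc _ C' g => weight C' + (if g is GOm _ _ then 1 else 0)
  end.

Definition realizes (k n m : nat) (C : circuit k n m) (F : seq (tup k n -> 'I_k)) : Prop :=
  forall f, List.In f F -> exists i : 'I_m, forall x, circ_vals C x i = f x.

Definition IB (k n : nat) (B : seq (kfun k)) (F : seq (tup k n -> 'I_k)) (i : nat) : Prop :=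
  (exists m (C : circuit k n m), [/\ circ_ok B C, realizes C F & weight C = i]) /\
  (forall m (C : circuit k n m), circ_ok B C -> realizes C F -> i <= weight C).

From mathcomp Require Import all_boot.
From mathcomp Require Import zify.

Set Implicit Arguments.
Unset Strict Implicit.
Unset Printing Implicit Defensive.

(* Call a pair a <= b a jump of a circuit if some node of the circuit
   decreases from a to b; the jumps of the realized system are among them.
   Adding a monotone gate creates no new jump: if no node decreases, the
   arguments of the gate increase componentwise.  Adding an omega-gate cuts
   a chain at the old jumps into segments on which the arguments of omega
   increase, so each segment carries at most d(B) new jumps.  With J old
   jumps the new count is at most J + (J + 1) d(B), i.e. J + 1 is multiplied
   by at most d(B) + 1 per omega-gate. *)

Fixpoint count_adj (T : Type) (P : rel T) (x : T) (s : seq T) : nat :=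
  if s is y :: s' then P x y + count_adj P y s' else 0.

Section CountAdj.
Variable T : Type.

Lemma count_adj_zip (P : rel T) x s :
  count (fun p => P p.1 p.2) (zip (x :: s) s) = count_adj P x s.
Proof. by elim: s x => [|y s IH] x //=; rewrite IH. Qed.

Lemma count_adj_sub (P Q : rel T) x s :
  subrel P Q -> count_adj P x s <= count_adj Q x s.
Proof.
move=> PQ; elim: s x => [|y s IH] x //=; apply: leq_add => //.
by case: (boolP (P x y)) => // /PQ ->.
Qed.

Lemma eq_count_adj (P Q : rel T) x s :
  P =2 Q -> count_adj P x s = count_adj Q x s.
Proof. by move=> PQ; elim: s x => [|y s IH] x //=; rewrite PQ IH. Qed.

Lemma count_adj_rcons (P : rel T) x s y :
  count_adj P x (rcons s y) = count_adj P x s + P (last x s) y.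
Proof. by elim: s x => [|z s IH] x /=; rewrite ?addn0 ?IH ?addnA. Qed.

Lemma count_adj_map (P : rel T) (U : Type) (h : U -> T) x s :
  count_adj P (h x) (map h s) = count_adj (relpre h P) x s.
Proof. by elim: s x => [|y s IH] x //=; rewrite IH. Qed.

Lemma count_adj0 (P R : rel T) x s :
  (forall a b, R a b -> ~~ P a b) -> path R x s -> count_adj P x s = 0.
Proof.
move=> RP; elim: s x => [|y s IH] x //= /andP[Rxy Rs].
by rewrite (negbTE (RP _ _ Rxy)) IH.
Qed.

(* [x :: r] is the part of the current P-free segment read so far. *)
Lemma count_adj_segments_acc (P Q R : rel T) (D : nat) :
  (forall x s, path [rel a b | R a b && ~~ P a b] x s ->
     count_adj Q x s <= D) ->
  forall s x r, path [rel a b | R a b && ~~ P a b] x r -> path R (last x r) s ->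
  count_adj Q x r + (count_adj [rel a b | P a b || Q a b] (last x r) s).+1
    <= (count_adj P (last x r) s).+1 * D.+1.
Proof.
move=> segD; elim=> [|y s IH] x r Pr /=; first by rewrite mul1n addn1 ltnS segD.
case/andP=> Rzy Rs; case Pzy: (P (last x r) y) => /=.
  have := IH y [::] isT Rs; have := segD _ _ Pr; rewrite /= add0n mulSn; lia.
have Pry : path [rel a b | R a b && ~~ P a b] x (rcons r y).
  by rewrite rcons_path Pr /= Rzy Pzy.
have := IH x (rcons r y) Pry; rewrite last_rcons count_adj_rcons => /(_ Rs).
rewrite add0n; lia.
Qed.

Lemma count_adj_segments (P Q R : rel T) (D : nat) x s :
  (forall x s, path [rel a b | R a b && ~~ P a b] x s ->
     count_adj Q x s <= D) ->
  path R x s ->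
  (count_adj [rel a b | P a b || Q a b] x s).+1 <= (count_adj P x s).+1 * D.+1.
Proof. by move=> segD; apply: (count_adj_segments_acc segD (r := [::])). Qed.

End CountAdj.

Section Destutter.
Variables (T : eqType) (le : rel T).
Hypothesis le_trans : transitive le.
Hypothesis le_anti : forall a b, le a b -> le b a -> a = b.

Fixpoint destutter (x : T) (s : seq T) : seq T :=
  if s is y :: s' then
    if y == x then destutter x s' else y :: destutter y s'
  else [::].

Definition strict : rel T := fun a b => (b != a) && le a b.

Lemma strict_trans : transitive strict.
Proof.
move=> b a c /andP[ba ab] /andP[cb bc]; rewrite /strict (le_trans ab bc) andbT.
by apply: contraNneq ba => ca; rewrite ca in bc; rewrite (le_anti ab bc).
Qed.

Lemma strict_irr : irreflexive strict.
Proof. by move=> a; rewrite /strict eqxx. Qed.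

Lemma destutter_path x s : path le x s -> path strict x (destutter x s).
Proof.
elim: s x => [|y s IH] x //= /andP[le_xy les].
by case: eqP => [<-|/eqP ne] /=; [exact: IH | rewrite /strict ne le_xy IH].
Qed.

Lemma destutter_uniq x s : path le x s -> uniq (x :: destutter x s).
Proof.
move/destutter_path; exact: (sorted_uniq strict_trans strict_irr (s := x :: _)).
Qed.

Lemma count_adj_destutter (P : rel T) x s :
  irreflexive P -> count_adj P x (destutter x s) = count_adj P x s.
Proof.
move=> Pirr; elim: s x => [|y s IH] x //=.
by case: eqP => [->|_] /=; rewrite ?Pirr IH.
Qed.

End Destutter.

Lemma le_tup_trans k q : transitive (@le_tup k q).
Proof.
move=> b a c /forallP ab /forallP bc; apply/forallP => j.
exact: leq_trans (ab j) (bc j).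
Qed.

Lemma le_tup_anti k q (a b : tup k q) : le_tup a b -> le_tup b a -> a = b.
Proof.
move=> /forallP ab /forallP ba; apply/ffunP => j; apply: val_inj.
by apply/eqP; rewrite eqn_leq ab ba.
Qed.

Lemma decr_cons k n (F : seq (tup k n -> 'I_k)) x s :
  decr F (x :: s) = count_adj (is_jump F) x s.
Proof. by rewrite /decr count_adj_zip. Qed.

Lemma decr_le_dsys k n (F : seq (tup k n -> 'I_k)) (t : seq (tup k n)) :
  is_chain t -> decr F t <= dsys F.
Proof.
move=> chain_t.
have size_t : size t < #|{: tup k n}|.+1.
  by rewrite ltnS; case/andP: chain_t => /card_uniqP <- _; exact: max_card.
apply: leq_trans (leq_bigmax (Ordinal size_t)).
exact: (leq_bigmax_cond (F := fun t' : (size t).-tuple _ => decr F t')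
  (in_tuple t)).
Qed.

Lemma dsys_le k n (F : seq (tup k n -> 'I_k)) (N : nat) :
  (forall t, is_chain t -> decr F t <= N) -> dsys F <= N.
Proof.
by move=> le_N; apply/bigmax_leqP => l _; apply/bigmax_leqP => t /le_N.
Qed.

(* Gate arguments along a chain may repeat; dropping adjacent repeats gives a
   chain with the same jumps. *)
Lemma path_decr_le_dsys k q (g : tup k q -> 'I_k) x s :
  path (@le_tup k q) x s -> count_adj (fun a b => g b < g a) x s <= dsys [:: g].
Proof.
move=> le_s; rewrite -(count_adj_destutter (P := fun a b => g b < g a));
  last by move=> a; rewrite ltnn.
have chain_s : is_chain (x :: destutter x s).
  have := destutter_uniq (@le_tup_trans k q) (@le_tup_anti k q) le_s.
  rewrite /is_chain => ->.
  by apply: sub_path (destutter_path le_s) => a b /andP[].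
apply: leq_trans (decr_le_dsys [:: g] chain_s).
by rewrite decr_cons; apply: count_adj_sub => a b /=; rewrite orbF.
Qed.

Lemma dsys_le_dB k (B : seq (kfun k)) w :
  List.In w B -> dsys [:: kf_fn w] <= dB B.
Proof.
rewrite /dB; elim: B => [|w' B IH] //= [->|inB]; rewrite big_cons.
  exact: leq_maxl.
exact: leq_trans (IH inB) (leq_maxr _ _).
Qed.

Definition node_jump k n m (C : circuit k n m) (a b : tup k n) : bool :=
  [exists i, circ_vals C b i < circ_vals C a i].

Definition gate_args k n m (C : circuit k n m) q (args : 'I_q -> 'I_m)
  (a : tup k n) : tup k q := [ffun j => circ_vals C a (args j)].

Section NodeJump.
Variables (k n m : nat) (C : circuit k n m).

Lemma node_jump_snoc g a b :
  node_jump (CSnoc C g) a b =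
  node_jump C a b
  || (gate_eval (circ_vals C b) g < gate_eval (circ_vals C a) g).
Proof.
apply/existsP/orP.
  case=> i; case: (unliftP ord_max i) => [j ->|->] /=;
    rewrite ?liftK ?unlift_none => dec;
    [left; apply/existsP; exists j | right] => //.
case=> [/existsP [j dec] | dec]; [exists (lift ord_max j) | exists ord_max];
  by rewrite /= ?liftK ?unlift_none.
Qed.

Lemma le_gate_args q (args : 'I_q -> 'I_m) a b :
  ~~ node_jump C a b -> le_tup (gate_args C args a) (gate_args C args b).
Proof.
by move/existsPn => nodec; apply/forallP => j; rewrite !ffunE leqNgt.
Qed.

Lemma node_jump_mono_gate q (f : tup k q -> 'I_k) args :
  mono f -> node_jump (CSnoc C (GMon f args)) =2 node_jump C.
Proof.
move=> mono_f a b; rewrite node_jump_snoc /=.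
case: (boolP (node_jump C a b)) => //= /(le_gate_args args)/mono_f.
by rewrite leqNgt => /negbTE.
Qed.

Lemma node_jump_init a b : le_tup a b -> ~~ node_jump (@CInit k n) a b.
Proof. by move=> /forallP le_ab; apply/existsPn => i /=; rewrite -leqNgt. Qed.

End NodeJump.

Lemma node_jumps_bound k n (B : seq (kfun k)) m (C : circuit k n m) x s :
  circ_ok B C -> path (@le_tup k n) x s ->
  (count_adj (node_jump C) x s).+1 <= (dB B).+1 ^ weight C.
Proof.
elim: C x s => [|m' C IH g] x s /=.
  by move=> _ le_s; rewrite (count_adj0 (@node_jump_init k n) le_s).
case=> okC; case: g => [q f args | w args] /= okg le_s.
  by rewrite addn0 (eq_count_adj _ _ (node_jump_mono_gate C args okg)) IH.
set Q := fun a b => kf_fn w (gate_args C args b) < kf_fn w (gate_args C args a).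
have segD y t : path [rel a b | le_tup a b && ~~ node_jump C a b] y t ->
    count_adj Q y t <= dB B.
  move=> jumpfree; apply: leq_trans (dsys_le_dB okg).
  have := path_decr_le_dsys (kf_fn w) (x := gate_args C args y)
    (s := map (gate_args C args) t); rewrite count_adj_map path_map; apply.
  by apply: sub_path jumpfree => a b /andP[_]; apply: le_gate_args.
rewrite (eq_count_adj _ _ (node_jump_snoc C _)) addn1 expnSr.
exact: leq_trans (count_adj_segments segD le_s) (leq_mul (IH _ _ okC le_s) _).
Qed.

Lemma is_jump_node_jump k n (F : seq (tup k n -> 'I_k)) m (C : circuit k n m) :
  realizes C F -> subrel (is_jump F) (node_jump C).
Proof.
elim: F => [|f F IH] realC a b //= /orP[dec | jumpF].
  have [i fi] := realC f (or_introl erefl).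
  by apply/existsP; exists i; rewrite !fi.
by apply: IH jumpF => f' inF; apply: realC; right.
Qed.

Theorem lemma1 (k : nat) (B : seq (kfun k)) (n : nat)
    (F : seq (tup k n -> 'I_k)) (i : nat) :
  2 <= k ->
  0 < size B ->
  (forall w, List.In w B -> ~ mono (kf_fn w)) ->
  0 < n ->
  IB B F i ->
  dsys F <= (dB B + 1) ^ i - 1.
Proof.
move=> _ _ _ _ [[m [C [okC realC <-]]] _].
apply: dsys_le => -[|x s] /andP[_ le_s] //; rewrite decr_cons.
have := node_jumps_bound okC le_s; rewrite addn1 subn1 => bound.
rewrite -ltnS (ltn_predK bound).
exact: leq_ltn_trans (count_adj_sub x s (is_jump_node_jump realC)) bound.
Qed.
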